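(* Let $\Omega=\{\Sigma_1,\dots,\Sigma_n\}$ be a distribution of a finite alphabet $\Sigma$ and let $\mathcal L\subseteq\Sigma^\star$ be a product language over $\Omega$. Fix $i$, write $\Gamma=\bigcup_{j\ne i}\Sigma_j$, and for each $j\neq i$ let $O_j\subseteq\mathcal L|_{\Sigma_j}$. Let $\sigma\in\Sigma_i^\star$ and $\sigma'\in\|_{j\neq i}(O_j,\Sigma_j)$ satisfy $\sigma'|_{\Sigma_i}=\sigma|_{\Gamma}$, and let $\sigma_{int}\in(\{\sigma\},\Sigma_i)\,\|\,(\{\sigma'\},\Gamma)$. Then $\sigma\in\mathcal L|_{\Sigma_i}$ if and only if $\sigma_{int}\in\mathcal L$.
   Context: $\sigma|_{\Sigma'}$ denotes the projection of a word onto $\Sigma'$ (the subsequence of symbols lying in $\Sigma'$), lifted elementwise to sets. For languages $\mathcal L_k\subseteq A_k^\star$, $\|_{k}(\mathcal L_k,A_k)=\{w\in(\bigcup_kA_k)^\star\mid\forall k.\ w|_{A_k}\in\mathcal L_k\}$. A distribution of $\Sigma$ is a finite set $\Omega=\{\Sigma_1,\dots,\Sigma_n\}$ of subsets with union $\Sigma$. $\mathcal L\subseteq\Sigma^\star$ is a product language over $\Omega$ if $\mathcal L=\|_{i=1}^n(\mathcal L_i,\Sigma_i)$ for some $\mathcal L_i\subseteq\Sigma_i^\star$. *)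

From mathcomp Require Import all_boot.
Set Implicit Arguments. Unset Strict Implicit. Unset Printing Implicit Defensive.

Definition lang (T : Type) := seq T -> Prop.

Section Lang.
Variable T : finType.

Definition proj (A : {set T}) (w : seq T) : seq T := [seq x <- w | x \in A].

Definition proj_lang (A : {set T}) (L : lang T) : lang T :=
  fun w => exists v, L v /\ w = proj A v.

Definition word_over (A : {set T}) (w : seq T) : bool := all (fun x => x \in A) w.

Definition sync (I : finType) (P : pred I) (A : I -> {set T}) (L : I -> lang T)
  : lang T :=
  fun w => word_over (\bigcup_(k | P k) A k) w /\
           forall k, P k -> L k (proj (A k) w).

Definition sync2 (L1 : lang T) (A1 : {set T}) (L2 : lang T) (A2 : {set T})
  : lang T :=
  fun w => word_over (A1 :|: A2) w /\ L1 (proj A1 w) /\ L2 (proj A2 w).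

Definition distribution (n : nat) (Sig : 'I_n -> {set T}) : Prop :=
  \bigcup_(k < n) Sig k = [set: T].

Definition product_language (n : nat) (Sig : 'I_n -> {set T}) (L : lang T)
  : Prop :=
  exists Lk : 'I_n -> lang T,
    (forall k w, Lk k w -> word_over (Sig k) w) /\
    forall w, L w <-> sync predT Sig Lk w.

End Lang.

From mathcomp Require Import all_boot.

Set Implicit Arguments.
Unset Strict Implicit.
Unset Printing Implicit Defensive.

(* Since L is a product language, membership of a word is decided componentwise by its
   projections. The projection of sigma_int onto Sig i is sigma, and its projection onto
   any other Sig j factors through Gamma, where it equals the projection of sigma', which
   lies in O j and hence in the projection of L. So only the i-th component is in doubt,
   and it holds exactly when sigma is a projection of a word of L. *)

Section Projection.
Variable T : finType.

Lemma proj_proj (A B : {set T}) (w : seq T) :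
  A \subset B -> proj A (proj B w) = proj A w.
Proof.
move=> /subsetP sAB; rewrite /proj -filter_predI; apply: eq_filter => x /=.
by case xA: (x \in A); rewrite ?andbF // (sAB _ xA).
Qed.

Lemma word_over_setT (w : seq T) : word_over [set: T] w.
Proof. by apply/allP => x _; rewrite inE. Qed.

End Projection.

Section ProductLanguage.
Variables (T : finType) (n : nat) (Sig : 'I_n -> {set T}).
Variables (L : lang T) (Lk : 'I_n -> lang T).
Hypothesis L_sync : forall w, L w <-> sync predT Sig Lk w.

Lemma product_proj_component (k : 'I_n) (w : seq T) :
  proj_lang (Sig k) L w -> Lk k w.
Proof. by case=> v [/L_sync [_ Lkv] ->]; apply: Lkv. Qed.

Lemma product_mem_of_components (w : seq T) : distribution Sig ->
  (forall k, Lk k (proj (Sig k) w)) -> L w.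
Proof.
by move=> SigT Lkw; apply/L_sync; split; [rewrite SigT; apply: word_over_setT|].
Qed.

End ProductLanguage.

Theorem mainTheorem4 (T : finType) (n : nat) (Sig : 'I_n -> {set T})
  (L : lang T) (i : 'I_n) (O : 'I_n -> lang T) (sigma sigma' sigma_int : seq T) :
  distribution Sig ->
  product_language Sig L ->
  (forall j, j != i -> forall w, O j w -> proj_lang (Sig j) L w) ->
  word_over (Sig i) sigma ->
  sync (fun j => j != i) Sig O sigma' ->
  proj (Sig i) sigma' = proj (\bigcup_(j | j != i) Sig j) sigma ->
  sync2 (fun w => w = sigma) (Sig i)
        (fun w => w = sigma') (\bigcup_(j | j != i) Sig j) sigma_int ->
  (proj_lang (Sig i) L sigma <-> L sigma_int).
Proof.
move=> SigT [Lk [_ L_sync]] O_proj _ [_ O_sigma'] _ [_ [int_i int_Gamma]].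
split=> [sigmaL | Lint]; last by exists sigma_int.
apply: (product_mem_of_components L_sync SigT) => k.
have [-> | kni] := eqVneq k i.
  by rewrite int_i; exact: (product_proj_component L_sync sigmaL).
have SigGamma : Sig k \subset \bigcup_(j | j != i) Sig j by apply: bigcup_sup.
rewrite -(proj_proj sigma_int SigGamma) int_Gamma.
exact: (product_proj_component L_sync (O_proj k kni _ (O_sigma' k kni))).
Qed.
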